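(* Let $h(x)=\frac{1}{e^x-1}$. For every integer $k\ge1$ and $\varepsilon>0$, $$D_{2,k}^\varepsilon:=\int_\varepsilon^\infty\frac{x^kh^{(k)}(x)}{e^x-1}dx=\sum_{j=1}^{k+1}(-1)^{j+1}K_{k+1,j}\,Z_\varepsilon(k,j).$$
   Context: For integers $0\le j\le m$, $K_{m,j}=\frac1m\binom mjB_{m-j}+\delta_{j,m-1}$, where $B_n$ are Bernoulli numbers ($\frac{t}{e^t-1}=\sum_nB_n\frac{t^n}{n!}$) and $\delta$ is the Kronecker delta. For $\varepsilon>0$ and integers $k,j\ge0$, $Z_\varepsilon(k,j)=\sum_{q=1}^\infty q^j\int_\varepsilon^\infty e^{-qy}y^kdy$. *)

From Stdlib Require Import Reals List.
From Coquelicot Require Import Coquelicot.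
Open Scope R_scope.

(* Bernoulli numbers with the convention t/(e^t-1) = sum_n B_n t^n/n!
   (so B_1 = -1/2), given by the recurrence equivalent to that generating
   function:  B_0 = 1,  B_n = -1/(n+1) * sum_{i<n} C(n+1,i) B_i. *)
Fixpoint bern_list (n : nat) : list R :=
  match n with
  | O => 1 :: nil
  | S m =>
      let l := bern_list m in
      let s := List.fold_right Rplus 0
                 (List.map (fun i => Binomial.C (S n) i * List.nth i l 0) (List.seq 0 n)) in
      l ++ ((- / INR (S n)) * s) :: nil
  end.

Definition bernoulli (n : nat) : R := List.nth n (bern_list n) 0.

Definition Kcoef (m j : nat) : R :=
  / INR m * Binomial.C m j * bernoulli (m - j) + (if Nat.eqb j (m - 1) then 1 else 0).

Definition Zeps (eps : R) (k j : nat) : R :=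
  Series (fun q : nat =>
    INR (S q) ^ j *
    RInt_gen (fun y => exp (- INR (S q) * y) * y ^ k)
             (at_point eps) (Rbar_locally p_infty)).

Definition hfun (x : R) : R := / (exp x - 1).

(* Write z = e^(-x).  Then h(x) = sum_(q>=1) z^q, so h^(k)(x) = (-1)^k sum_q q^k z^q, and
   dividing by e^x - 1 = (1 - z)/z turns the coefficients into partial sums of q^k.  The
   identity B_(k+1)(y+1) - B_(k+1)(y) = (k+1) y^k for Bernoulli polynomials rewrites these
   partial sums through the K_(k+1,j), giving
     x^k h^(k)(x) / (e^x - 1) = sum_j (-1)^(j+1) K_(k+1,j) x^k sum_q q^j e^(-q x).
   For any weights w with w_0 = 0, x^k sum_q w_q e^(-q x) has the explicit antiderivative
   -sum_(i<=k) k!/i! x^i sum_q w_q q^(i-k-1) e^(-q x), which vanishes at infinity; applied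
   to w_q = q^j on one side and to a single q on the other, it evaluates both the integral
   and Z_eps(k,j) by the same finite sum. *)

From Stdlib Require Import Reals Lra Lia List Factorial.
From Coquelicot Require Import Coquelicot.
Open Scope R_scope.

Lemma fold_right_Rplus_init (l : list R) (c : R) :
  fold_right Rplus c l = fold_right Rplus 0 l + c.
Proof. induction l as [|a l IH]; simpl; [ring | rewrite IH; ring]. Qed.

Lemma fold_right_Rplus_map_seq (g : nat -> R) (m : nat) :
  fold_right Rplus 0 (map g (seq 0 (S m))) = sum_f_R0 g m.
Proof.
  induction m as [|m IH]; [simpl; ring|].
  rewrite seq_S, map_app, fold_right_app, fold_right_Rplus_init, IH. simpl. ring.
Qed.

Lemma bern_list_S (m : nat) : bern_list (S m) = bern_list m ++
  (- / INR (S (S m)) * fold_right Rplus 0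
     (map (fun i => Binomial.C (S (S m)) i * nth i (bern_list m) 0) (seq 0 (S m)))) :: nil.
Proof. reflexivity. Qed.

Lemma length_bern_list (n : nat) : length (bern_list n) = S n.
Proof.
  induction n as [|n IH]; [reflexivity|].
  rewrite bern_list_S, length_app, IH. simpl. lia.
Qed.

Lemma nth_bern_list (m i : nat) : (i <= m)%nat -> nth i (bern_list m) 0 = bernoulli i.
Proof.
  induction m as [|m IH]; intros Hi.
  - replace i with 0%nat by lia. reflexivity.
  - destruct (Nat.eq_dec i (S m)) as [->|Hne]; [reflexivity|].
    rewrite bern_list_S, app_nth1 by (rewrite length_bern_list; lia). apply IH. lia.
Qed.

Lemma bernoulli_S (m : nat) : bernoulli (S m) =
  - / INR (S (S m)) * sum_f_R0 (fun i => Binomial.C (S (S m)) i * bernoulli i) m.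
Proof.
  unfold bernoulli at 1.
  rewrite bern_list_S, app_nth2 by (rewrite length_bern_list; lia).
  rewrite length_bern_list, Nat.sub_diag. cbn [nth].
  rewrite fold_right_Rplus_map_seq. f_equal.
  apply sum_eq. intros i Hi. rewrite nth_bern_list by lia. reflexivity.
Qed.

Lemma C_Sn_n (n : nat) : Binomial.C (S n) n = INR (S n).
Proof.
  unfold Binomial.C. replace (S n - n)%nat with 1%nat by lia.
  rewrite fact_simpl, mult_INR. simpl (INR (fact 1)).
  field. apply INR_fact_neq_0.
Qed.

Lemma sum_C_bernoulli (m : nat) :
  sum_f_R0 (fun l => Binomial.C m l * bernoulli l) m =
  bernoulli m + (if Nat.eqb m 1 then 1 else 0).
Proof.
  destruct m as [|[|m]].
  - simpl. rewrite C_n_n. ring.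
  - simpl. rewrite C_n_n, C_n_0. change (bernoulli 0) with 1. ring.
  - rewrite tech5, C_n_n. cbn [Nat.eqb].
    assert (Hrec : sum_f_R0 (fun i => Binomial.C (S (S m)) i * bernoulli i) (S m) = 0).
    { rewrite tech5, C_Sn_n, bernoulli_S.
      field. apply not_0_INR. lia. }
    rewrite Hrec. ring.
Qed.

Lemma sum_f_R0_swap (f : nat -> nat -> R) (N M : nat) :
  sum_f_R0 (fun i => sum_f_R0 (fun j => f i j) N) M =
  sum_f_R0 (fun j => sum_f_R0 (fun i => f i j) M) N.
Proof.
  induction M as [|M IH]; [reflexivity|].
  rewrite tech5, IH, <- plus_sum. apply sum_eq. intros. rewrite tech5. reflexivity.
Qed.

Lemma sum_f_R0_pad (f : nat -> R) (m N : nat) : (m <= N)%nat ->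
  sum_f_R0 f m = sum_f_R0 (fun i => if Nat.leb i m then f i else 0) N.
Proof.
  intros HmN. induction N as [|N IH].
  - replace m with 0%nat by lia. reflexivity.
  - destruct (Nat.eq_dec m (S N)) as [->|Hne].
    + apply sum_eq. intros i Hi. destruct (Nat.leb_spec i (S N)); [reflexivity|lia].
    + rewrite tech5, <- IH by lia. destruct (Nat.leb_spec (S N) m); [lia|ring].
Qed.

Lemma sum_f_R0_rev (f : nat -> R) (n : nat) :
  sum_f_R0 f n = sum_f_R0 (fun i => f (n - i)%nat) n.
Proof.
  revert f. induction n as [|n IH]; intros f; [reflexivity|].
  rewrite decomp_sum by lia. simpl pred. rewrite IH, tech5, Nat.sub_diag, Rplus_comm.
  f_equal. apply sum_eq. intros i Hi. f_equal. lia.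
Qed.

Lemma sum_f_R0_delta (g : nat -> R) (p N : nat) : (p <= N)%nat ->
  sum_f_R0 (fun i => if Nat.eqb i p then g i else 0) N = g p.
Proof.
  intros HpN. induction N as [|N IH].
  - replace p with 0%nat by lia. reflexivity.
  - rewrite tech5. destruct (Nat.eq_dec p (S N)) as [->|Hne].
    + rewrite Nat.eqb_refl, (sum_eq _ (fun _ => 0)), sum_cte; [ring|].
      intros i Hi. destruct (Nat.eqb_spec i (S N)); [lia|reflexivity].
    + rewrite IH by lia. destruct (Nat.eqb_spec (S N) p); [lia|ring].
Qed.

Lemma C_mul_C_sub_comm (n l i : nat) : (l + i <= n)%nat ->
  Binomial.C n l * Binomial.C (n - l) i = Binomial.C n i * Binomial.C (n - i) l.
Proof.
  intros H. unfold Binomial.C.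
  replace (n - l - i)%nat with (n - i - l)%nat by lia.
  pose proof (INR_fact_neq_0 l). pose proof (INR_fact_neq_0 i).
  pose proof (INR_fact_neq_0 (n - l)). pose proof (INR_fact_neq_0 (n - i)).
  pose proof (INR_fact_neq_0 (n - i - l)).
  field. tauto.
Qed.

Definition bernoulli_poly (n : nat) (y : R) : R :=
  sum_f_R0 (fun l => Binomial.C n l * bernoulli l * y ^ (n - l)) n.

Lemma bernoulli_poly_rev (n : nat) (y : R) : bernoulli_poly n y =
  sum_f_R0 (fun j => Binomial.C n j * bernoulli (n - j) * y ^ j) n.
Proof.
  unfold bernoulli_poly. rewrite sum_f_R0_rev. apply sum_eq. intros i Hi.
  rewrite <- pascal_step1 by lia. repeat f_equal. lia.
Qed.

Lemma bernoulli_poly_add1_expand (n : nat) (y : R) : bernoulli_poly n (y + 1) =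
  sum_f_R0 (fun i => Binomial.C n i * y ^ i *
    sum_f_R0 (fun l => Binomial.C (n - i) l * bernoulli l) (n - i)) n.
Proof.
  unfold bernoulli_poly.
  transitivity (sum_f_R0 (fun l => sum_f_R0 (fun i => if Nat.leb i (n - l)
    then Binomial.C n l * bernoulli l * (Binomial.C (n - l) i * y ^ i) else 0) n) n).
  { apply sum_eq. intros l Hl. rewrite binomial, (sum_f_R0_pad _ (n - l) n), scal_sum by lia.
    apply sum_eq. intros i Hi. destruct (Nat.leb i (n - l)); [rewrite pow1|]; ring. }
  rewrite sum_f_R0_swap. apply sum_eq. intros i Hi.
  rewrite (sum_f_R0_pad _ (n - i) n), scal_sum by lia. apply sum_eq. intros l Hl.
  destruct (Nat.leb_spec i (n - l)), (Nat.leb_spec l (n - i)); try lia; [|ring].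
  pose proof (C_mul_C_sub_comm n l i ltac:(lia)) as HC.
  transitivity (Binomial.C n l * Binomial.C (n - l) i * bernoulli l * y ^ i); [ring|].
  rewrite HC. ring.
Qed.

Lemma bernoulli_poly_add1 (n : nat) (y : R) : (1 <= n)%nat ->
  bernoulli_poly n (y + 1) = bernoulli_poly n y + INR n * y ^ (n - 1).
Proof.
  intros Hn. rewrite bernoulli_poly_add1_expand, bernoulli_poly_rev.
  transitivity (sum_f_R0 (fun i => Binomial.C n i * bernoulli (n - i) * y ^ i) n +
    sum_f_R0 (fun i => if Nat.eqb i (n - 1) then Binomial.C n i * y ^ i else 0) n).
  { rewrite <- plus_sum. apply sum_eq. intros i Hi. rewrite sum_C_bernoulli.
    destruct (Nat.eqb_spec (n - i) 1), (Nat.eqb_spec i (n - 1)); try lia; ring. }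
  rewrite sum_f_R0_delta by lia.
  destruct n as [|m]; [lia|]. replace (S m - 1)%nat with m by lia. rewrite C_Sn_n. ring.
Qed.

Lemma Kcoef_diff_pow (n : nat) (x : R) : (2 <= n)%nat ->
  sum_f_R0 (fun j => (-1) ^ (j + 1) * Kcoef n j * ((x + 1) ^ j - x ^ j)) n =
  (-1) ^ (n - 1) * x ^ (n - 1).
Proof.
  intros Hn.
  assert (Hneg : forall (a : R) j, (- a) ^ j = (-1) ^ j * a ^ j).
  { intros a j. rewrite <- Rpow_mult_distr. f_equal. ring. }
  assert (Hn0 : INR n <> 0) by (apply not_0_INR; lia).
  (* the K-sum splits as (B_n(-x) - B_n(-x-1))/n plus the delta term at j = n-1 *)
  transitivity (- / INR n * bernoulli_poly n (- (x + 1)) + / INR n * bernoulli_poly n (- x)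
    + sum_f_R0 (fun j => if Nat.eqb j (n - 1)
                         then (-1) ^ (j + 1) * ((x + 1) ^ j - x ^ j) else 0) n).
  { rewrite !bernoulli_poly_rev, !scal_sum, <- !plus_sum. apply sum_eq. intros j Hj.
    unfold Kcoef. rewrite !Hneg, pow_add. destruct (Nat.eqb j (n - 1)); ring. }
  rewrite sum_f_R0_delta by lia.
  replace (- x) with (- (x + 1) + 1) by ring. rewrite bernoulli_poly_add1 by lia.
  rewrite Hneg, pow_add. field. exact Hn0.
Qed.

Definition Kcoef_signed (k j : nat) : R := (-1) ^ (j + 1) * Kcoef (k + 1) j.

Lemma Kcoef_signed_diff_pow (k : nat) (x : R) : (1 <= k)%nat ->
  sum_f_R0 (fun j => Kcoef_signed k (S j) * ((x + 1) ^ S j - x ^ S j)) k = (-1) ^ k * x ^ k.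
Proof.
  intros Hk. pose proof (Kcoef_diff_pow (k + 1) x ltac:(lia)) as H.
  rewrite decomp_sum in H by lia.
  replace (pred (k + 1)) with k in H by lia. replace (k + 1 - 1)%nat with k in H by lia.
  rewrite <- H, !pow_O, Rminus_diag, Rmult_0_r, Rplus_0_l. reflexivity.
Qed.

Definition radius_ge1 (a : nat -> R) : Prop := Rbar_le 1 (CV_radius a).

Lemma radius_ge1_lt (a : nat -> R) (z : R) :
  radius_ge1 a -> 0 <= z < 1 -> Rbar_lt (Rabs z) (CV_radius a).
Proof.
  intros Ha Hz. apply Rbar_lt_le_trans with 1; [|exact Ha].
  simpl. rewrite Rabs_pos_eq; lra.
Qed.

Lemma radius_ge1_ext (a b : nat -> R) :
  (forall n, a n = b n) -> radius_ge1 a -> radius_ge1 b.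
Proof. intros H. unfold radius_ge1. rewrite (CV_radius_ext a b H). auto. Qed.

Lemma radius_ge1_const (c : R) : radius_ge1 (fun _ => c).
Proof.
  apply (proj1 (CV_radius_bounded (fun _ => c))).
  exists (Rabs c). intros n. rewrite pow1, Rmult_1_r. lra.
Qed.

Lemma radius_ge1_le (a b : nat -> R) :
  (forall n, Rabs (b n) <= Rabs (a n)) -> radius_ge1 a -> radius_ge1 b.
Proof.
  intros Hba Ha. apply Rbar_le_trans with (1 := Ha).
  apply (proj2 (CV_radius_bounded a)). intros r [M HM].
  apply (proj1 (CV_radius_bounded b)). exists M. intros n.
  eapply Rle_trans; [|apply (HM n)]. rewrite !Rabs_mult.
  apply Rmult_le_compat_r; [apply Rabs_pos | apply Hba].
Qed.

Lemma PS_incr_1_derive (a : nat -> R) (n : nat) :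
  PS_incr_1 (PS_derive a) n = INR n * a n.
Proof. destruct n as [|n]; simpl; [unfold zero; simpl; ring | reflexivity]. Qed.

Lemma radius_ge1_mul_INR (a : nat -> R) :
  radius_ge1 a -> radius_ge1 (fun n => INR n * a n).
Proof.
  intros Ha. apply radius_ge1_ext with (PS_incr_1 (PS_derive a)); [apply PS_incr_1_derive|].
  unfold radius_ge1. rewrite CV_radius_incr_1, CV_radius_derive. exact Ha.
Qed.

Definition npow (n : nat) : nat -> R := fun m => INR m ^ n.

Lemma radius_ge1_npow (n : nat) : radius_ge1 (npow n).
Proof.
  induction n as [|n IH].
  - apply radius_ge1_ext with (fun _ => 1); [reflexivity | apply radius_ge1_const].
  - apply radius_ge1_ext with (fun m => INR m * npow n m); [reflexivity|].
    apply radius_ge1_mul_INR, IH.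
Qed.

Lemma exp_neg_bounds (x : R) : 0 < x -> 0 < exp (- x) < 1.
Proof. intros Hx. split; [apply exp_pos|]. rewrite <- exp_0. apply exp_increasing. lra. Qed.

Lemma is_derive_eq (f : R -> R) (x l l' : R) : is_derive f x l -> l = l' -> is_derive f x l'.
Proof. intros H <-. exact H. Qed.

Lemma is_derive_PSeries_exp_neg (a : nat -> R) (x : R) : radius_ge1 a -> 0 < x ->
  is_derive (fun y => PSeries a (exp (- y))) x
    (- PSeries (fun n => INR n * a n) (exp (- x))).
Proof.
  intros Ha Hx. pose proof (exp_neg_bounds x Hx) as Hz.
  eapply is_derive_eq.
  - apply (is_derive_comp (PSeries a) (fun y => exp (- y))).
    + apply is_derive_PSeries, radius_ge1_lt; [exact Ha | lra].
    + auto_derive; auto.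
  - rewrite <- (PSeries_ext _ _ _ (PS_incr_1_derive a)), PSeries_incr_1.
    change (scal ?u ?v) with (u * v). ring.
Qed.

Lemma hfun_PSeries (x : R) : 0 < x -> hfun x = PSeries (npow 0) (exp (- x)) - 1.
Proof.
  intros Hx. pose proof (exp_neg_bounds x Hx) as Hz.
  assert (Hgeom : PSeries (npow 0) (exp (- x)) = / (1 - exp (- x))).
  { rewrite <- Series_geom by (rewrite Rabs_pos_eq; lra).
    rewrite PSeries_eq. apply Series_ext. intros n.
    change (scal ?u ?v) with (u * v). rewrite pow_n_pow. unfold npow. simpl. ring. }
  unfold hfun. rewrite Hgeom, exp_Ropp.
  assert (1 < exp x) by (rewrite <- exp_0; apply exp_increasing; lra).
  field. split; lra.
Qed.

Lemma Derive_n_hfun (n : nat) (x : R) : 0 < x ->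
  Derive_n hfun n x =
  (-1) ^ n * PSeries (npow n) (exp (- x)) - (if Nat.eqb n 0 then 1 else 0).
Proof.
  revert x. induction n as [|n IH]; intros x Hx.
  - simpl. rewrite hfun_PSeries by exact Hx. ring.
  - simpl Derive_n.
    rewrite (Derive_ext_loc _ (fun y => (-1) ^ n * PSeries (npow n) (exp (- y))
                                       - (if Nat.eqb n 0 then 1 else 0))).
    2:{ apply (filter_imp (fun y => 0 < y)); [exact IH | apply open_gt; exact Hx]. }
    apply is_derive_unique.
    eapply is_derive_eq.
    + apply (is_derive_minus (fun y => (-1) ^ n * PSeries (npow n) (exp (- y))) (fun _ => _)).
      * apply is_derive_scal, is_derive_PSeries_exp_neg; [apply radius_ge1_npow | exact Hx].
      * apply is_derive_const.
    + unfold minus, plus, opp, zero; simpl.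
      rewrite (PSeries_ext _ (npow (S n))) by reflexivity. ring.
Qed.

Lemma PSeries_sum_f_R0 (c : nat -> R) (b : nat -> nat -> R) (z : R) (N : nat) :
  (forall j, ex_pseries (b j) z) ->
  ex_pseries (fun m => sum_f_R0 (fun j => c j * b j m) N) z /\
  PSeries (fun m => sum_f_R0 (fun j => c j * b j m) N) z =
  sum_f_R0 (fun j => c j * PSeries (b j) z) N.
Proof.
  intros Hb.
  assert (Hscal : forall j, ex_pseries (PS_scal (c j) (b j)) z)
    by (intros j; apply ex_pseries_scal; [apply Rmult_comm | apply Hb]).
  induction N as [|N [IHex IHeq]]; simpl.
  - split; [exact (Hscal 0%nat)|].
    rewrite <- PSeries_scal. reflexivity.
  - split.
    + exact (ex_pseries_plus _ _ _ IHex (Hscal (S N))).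
    + rewrite <- IHeq, <- PSeries_scal, <- PSeries_plus by auto. reflexivity.
Qed.

Lemma PSeries_mul_1_minus (A d : nat -> R) (z : R) :
  ex_pseries A z -> A 0%nat = 0 -> (forall m, A (S m) - A m = d m) ->
  PSeries A z * (1 - z) = z * PSeries d z.
Proof.
  intros HA HA0 Hd.
  rewrite Rmult_minus_distr_l, Rmult_1_r, Rmult_comm, <- !PSeries_incr_1.
  rewrite <- PSeries_minus by (try apply ex_pseries_incr_1; exact HA).
  apply PSeries_ext. intros [|m]; unfold PS_minus, PS_incr_1, minus, plus, opp, zero; simpl.
  - rewrite HA0. ring.
  - rewrite <- Hd. ring.
Qed.

Lemma Derive_n_hfun_div (k : nat) (x : R) : (1 <= k)%nat -> 0 < x ->
  Derive_n hfun k x / (exp x - 1) =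
  sum_f_R0 (fun j => Kcoef_signed k (S j) * PSeries (npow (S j)) (exp (- x))) k.
Proof.
  intros Hk Hx. pose proof (exp_neg_bounds x Hx) as Hz. set (z := exp (- x)) in *.
  destruct (PSeries_sum_f_R0 (fun j => Kcoef_signed k (S j)) (fun j => npow (S j)) z k)
    as [Hex <-].
  { intros j. apply CV_radius_inside, radius_ge1_lt; [apply radius_ge1_npow | lra]. }
  set (A := fun m => sum_f_R0 (fun j => Kcoef_signed k (S j) * npow (S j) m) k) in *.
  assert (HA : PSeries A z * (1 - z) = z * PSeries (PS_scal ((-1) ^ k) (npow k)) z).
  { apply PSeries_mul_1_minus; [exact Hex | |].
    - unfold A. rewrite (sum_eq _ (fun _ => 0)), sum_cte; [ring|].
      intros j _. unfold npow. simpl. ring.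
    - intros m. unfold A, PS_scal, npow. rewrite <- minus_sum, S_INR.
      change (scal ?u ?v) with (u * v). rewrite <- (Kcoef_signed_diff_pow k (INR m) Hk).
      apply sum_eq. intros j _. ring. }
  rewrite PSeries_scal in HA. change (scal ?u ?v) with (u * v) in HA.
  rewrite Derive_n_hfun by exact Hx. fold z.
  replace (if Nat.eqb k 0 then 1 else 0) with 0 by (destruct k; [lia | reflexivity]).
  replace (exp x) with (/ z) by (unfold z; rewrite exp_Ropp, Rinv_inv; reflexivity).
  apply Rmult_eq_reg_r with (1 - z); [|lra]. rewrite HA.
  field. split; lra.
Qed.

Lemma pow_div_fact_le_exp (x : R) (n : nat) : 0 <= x -> x ^ n / INR (fact n) <= exp x.
Proof.
  intros Hx. eapply Rle_trans; [|apply (exp_ge_taylor x n Hx)].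
  destruct n as [|n]; [simpl; lra|]. rewrite tech5.
  enough (0 <= sum_f_R0 (fun i => x ^ i / INR (fact i)) n) by lra.
  apply cond_pos_sum. intros i. apply Rmult_le_pos; [apply pow_le; lra|].
  left. apply Rinv_0_lt_compat, INR_fact_lt_0.
Qed.

Lemma is_lim_pow_mul_exp_neg (i : nat) : is_lim (fun x => x ^ i * exp (- x)) p_infty 0.
Proof.
  apply is_lim_spec. intros eps. pose proof (cond_pos eps) as Heps.
  set (F := INR (fact (S i))). assert (HF : 0 < F) by apply INR_fact_lt_0.
  exists (Rmax 1 (F / eps)). intros x Hx.
  pose proof (Rmax_l 1 (F / eps)). pose proof (Rmax_r 1 (F / eps)).
  assert (Hxi : 0 < x ^ i) by (apply pow_lt; lra).
  assert (HxSi : 0 < x ^ S i / F) by (apply Rdiv_lt_0_compat; [apply pow_lt|]; lra).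
  (* e^x >= x^(i+1)/(i+1)!, so x^i e^(-x) <= (i+1)!/x *)
  assert (Hexp := pow_div_fact_le_exp x (S i) ltac:(lra)). fold F in Hexp.
  rewrite Rminus_0_r, Rabs_pos_eq by (apply Rmult_le_pos; [lra | left; apply exp_pos]).
  rewrite exp_Ropp.
  apply Rle_lt_trans with (x ^ i * / (x ^ S i / F)).
  - apply Rmult_le_compat_l; [lra|]. apply Rinv_le_contravar; assumption.
  - rewrite <- tech_pow_Rmult.
    replace (x ^ i * / (x * x ^ i / F)) with (F / x) by (field; lra).
    apply Rmult_lt_reg_r with x; [lra|]. unfold Rdiv.
    rewrite Rmult_assoc, Rinv_l, Rmult_1_r by lra.
    replace F with (eps * (F / eps)) by (field; lra).
    apply Rmult_lt_compat_l; lra.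
Qed.

Lemma filter_prod_at_point_ge (eps : R) (P : R -> Prop) :
  (forall y, eps <= y -> P y) ->
  filter_prod (at_point eps) (Rbar_locally p_infty)
    (fun ab => forall y, Rmin (fst ab) (snd ab) <= y <= Rmax (fst ab) (snd ab) -> P y).
Proof.
  intros HP. apply Filter_prod with (fun a => a = eps) (fun b => eps < b).
  - reflexivity.
  - exists eps. auto.
  - intros a b -> Hb y Hy. simpl in Hy.
    rewrite Rmin_left, Rmax_right in Hy by lra. apply HP. lra.
Qed.

Lemma filter_prod_at_point_gt (eps : R) (P : R -> Prop) :
  (forall y, eps <= y -> P y) ->
  filter_prod (at_point eps) (Rbar_locally p_infty)
    (fun ab => forall y, Rmin (fst ab) (snd ab) < y < Rmax (fst ab) (snd ab) -> P y).
Proof.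
  intros HP. eapply filter_imp; [|exact (filter_prod_at_point_ge eps P HP)].
  intros ab H y Hy. apply H. lra.
Qed.

Definition fact_ratio (k i : nat) : R := INR (fact k) / INR (fact i).

Lemma fact_ratio_S (k m : nat) : fact_ratio k (S m) * INR (S m) = fact_ratio k m.
Proof.
  unfold fact_ratio. rewrite fact_simpl, mult_INR. pose proof (INR_fact_neq_0 m).
  assert (INR (S m) <> 0) by (apply not_0_INR; lia). field. auto.
Qed.

Section Antiderivative.

Variable w : nat -> R.
Hypothesis Hw : radius_ge1 w.
(* Needed because [w_div_pow] takes the junk value [w 0 / 0 ^ p] at [q = 0]. *)
Hypothesis Hw0 : w 0%nat = 0.

Definition w_div_pow (p : nat) : nat -> R := fun q => w q / INR q ^ p.

Definition polylog_exp (p : nat) (x : R) : R := PSeries (w_div_pow p) (exp (- x)).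

Definition antideriv_sum (k m : nat) (x : R) : R :=
  sum_f_R0 (fun i => fact_ratio k i * x ^ i * polylog_exp (k + 1 - i) x) m.

Lemma radius_ge1_w_div_pow (p : nat) : radius_ge1 (w_div_pow p).
Proof.
  apply radius_ge1_le with w; [|exact Hw]. intros q. unfold w_div_pow, Rdiv.
  rewrite Rabs_mult. apply Rle_trans with (Rabs (w q) * 1); [|lra].
  apply Rmult_le_compat_l; [apply Rabs_pos|].
  destruct q as [|q].
  - destruct p; simpl; [rewrite Rinv_1 | rewrite Rmult_0_l, Rinv_0]; rewrite ?Rabs_R1, ?Rabs_R0; lra.
  - assert (H1 : 1 <= INR (S q) ^ p) by (apply pow_R1_Rle; rewrite S_INR; pose proof (pos_INR q); lra).
    rewrite Rabs_pos_eq by (left; apply Rinv_0_lt_compat; lra).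
    rewrite <- Rinv_1. apply Rinv_le_contravar; lra.
Qed.

Lemma INR_mul_w_div_pow_S (p n : nat) : INR n * w_div_pow (S p) n = w_div_pow p n.
Proof.
  unfold w_div_pow. destruct n as [|n].
  - rewrite Hw0. unfold Rdiv. ring.
  - assert (INR (S n) <> 0) by (apply not_0_INR; lia).
    assert (INR (S n) ^ p <> 0) by (apply pow_nonzero; auto).
    rewrite <- tech_pow_Rmult. field. auto.
Qed.

Lemma is_derive_polylog_exp (p : nat) (x : R) : 0 < x ->
  is_derive (polylog_exp (S p)) x (- polylog_exp p x).
Proof.
  intros Hx. unfold polylog_exp.
  rewrite <- (PSeries_ext _ _ _ (INR_mul_w_div_pow_S p)).
  apply is_derive_PSeries_exp_neg; [apply radius_ge1_w_div_pow | exact Hx].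
Qed.

Lemma is_derive_antideriv_sum (k m : nat) (x : R) : (m <= k)%nat -> 0 < x ->
  is_derive (antideriv_sum k m) x (- (fact_ratio k m * x ^ m * polylog_exp (k - m) x)).
Proof.
  intros Hm Hx. induction m as [|m IH].
  - apply (is_derive_ext (fun y => fact_ratio k 0 * polylog_exp (S k) y)).
    { intros y. unfold antideriv_sum. simpl. rewrite Nat.add_1_r, Nat.sub_0_r. ring. }
    eapply is_derive_eq.
    + apply is_derive_scal, is_derive_polylog_exp, Hx.
    + rewrite Nat.sub_0_r. change (scal ?u ?v) with (u * v). simpl. ring.
  - (* the derivative of the new term cancels the previous boundary term *)
    assert (Hp : (k + 1 - S m)%nat = S (k - S m)) by lia.
    apply (is_derive_ext (fun y => antideriv_sum k m y +
       fact_ratio k (S m) * y ^ S m * polylog_exp (S (k - S m)) y)).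
    { intros y. unfold antideriv_sum. simpl sum_f_R0 at 2. rewrite Hp. reflexivity. }
    eapply is_derive_eq.
    + apply (is_derive_plus (antideriv_sum k m)); [apply IH; lia|].
      apply (is_derive_mult (fun y => fact_ratio k (S m) * y ^ S m)).
      * apply is_derive_scal, (is_derive_pow (fun y => y)), is_derive_id.
      * apply is_derive_polylog_exp, Hx.
      * apply Rmult_comm.
    + replace (k - m)%nat with (S (k - S m)) by lia. rewrite <- (fact_ratio_S k m).
      unfold plus, mult, one; simpl. ring.
Qed.

Lemma is_derive_neg_antideriv_sum (k : nat) (x : R) : 0 < x ->
  is_derive (fun y => - antideriv_sum k k y) x (x ^ k * PSeries w (exp (- x))).
Proof.
  intros Hx. eapply is_derive_eq.
  - apply (is_derive_opp (antideriv_sum k k)), is_derive_antideriv_sum; [lia | exact Hx].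
  - rewrite Nat.sub_diag. unfold polylog_exp, fact_ratio, opp; simpl.
    rewrite (PSeries_ext (w_div_pow 0) w) by (intros q; unfold w_div_pow; simpl; field).
    field. apply INR_fact_neq_0.
Qed.

Lemma is_lim_pow_mul_polylog_exp (p i : nat) :
  is_lim (fun x => x ^ i * polylog_exp (S p) x) p_infty 0.
Proof.
  (* the constant coefficient vanishes, so polylog_exp (S p) x = e^(-x) G(e^(-x)) with G continuous at 0 *)
  set (G := PSeries (PS_decr_1 (w_div_pow (S p)))).
  assert (HG : Rbar_lt (Rabs 0) (CV_radius (PS_decr_1 (w_div_pow (S p))))).
  { rewrite CV_radius_decr_1. apply radius_ge1_lt; [apply radius_ge1_w_div_pow | lra]. }
  apply is_lim_ext_loc with (fun x => (x ^ i * exp (- x)) * G (exp (- x))).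
  { exists 0. intros x Hx. pose proof (exp_neg_bounds x Hx). unfold polylog_exp.
    rewrite (PSeries_decr_1 (w_div_pow (S p))).
    - unfold w_div_pow at 1. rewrite Hw0. unfold G, Rdiv. ring.
    - apply CV_radius_inside, radius_ge1_lt; [apply radius_ge1_w_div_pow | lra]. }
  replace (Finite 0) with (Rbar_mult 0 (G 0)) by (simpl; rewrite Rmult_0_l; reflexivity).
  apply is_lim_mult; [apply is_lim_pow_mul_exp_neg | | simpl; auto].
  assert (Hz : is_lim (fun x => exp (- x)) p_infty 0).
  { apply (is_lim_ext (fun x => x ^ 0 * exp (- x))); [intros; simpl; ring|].
    apply is_lim_pow_mul_exp_neg. }
  eapply filterlim_comp; [exact Hz|].
  apply continuity_pt_filterlim, PSeries_continuity, HG.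
Qed.

Lemma is_lim_antideriv_sum (k m : nat) : (m <= k)%nat ->
  is_lim (antideriv_sum k m) p_infty 0.
Proof.
  induction m as [|m IH]; intros Hm.
  - apply (is_lim_ext (fun x => fact_ratio k 0 * (x ^ 0 * polylog_exp (S k) x))).
    { intros x. unfold antideriv_sum. simpl. rewrite Nat.add_1_r, Nat.sub_0_r. ring. }
    replace (Finite 0) with (Rbar_mult (fact_ratio k 0) 0) by (simpl; f_equal; ring).
    apply is_lim_scal_l, is_lim_pow_mul_polylog_exp.
  - apply (is_lim_ext (fun x => antideriv_sum k m x +
      fact_ratio k (S m) * (x ^ S m * polylog_exp (S (k - S m)) x))).
    { intros x. unfold antideriv_sum. rewrite tech5.
      replace (k + 1 - S m)%nat with (S (k - S m)) by lia. ring. }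
    replace (Finite 0) with (Finite (0 + fact_ratio k (S m) * 0)) by (f_equal; ring).
    apply is_lim_plus'; [apply IH; lia|].
    apply (is_lim_scal_l _ _ _ 0), is_lim_pow_mul_polylog_exp.
Qed.

Lemma is_RInt_gen_pow_mul_PSeries_exp_neg (k : nat) (eps : R) : 0 < eps ->
  is_RInt_gen (fun x => x ^ k * PSeries w (exp (- x)))
    (at_point eps) (Rbar_locally p_infty) (antideriv_sum k k eps).
Proof.
  intros Heps. set (F := fun y => - antideriv_sum k k y).
  assert (HF : forall y, eps <= y -> is_derive F y (y ^ k * PSeries w (exp (- y))))
    by (intros y Hy; apply is_derive_neg_antideriv_sum; lra).
  replace (antideriv_sum k k eps) with (0 - F eps) by (unfold F; ring).
  apply (is_RInt_gen_ext (Derive F)).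
  { apply filter_prod_at_point_gt. intros y Hy. apply is_derive_unique, HF, Hy. }
  apply is_RInt_gen_Derive.
  - apply filter_prod_at_point_ge. intros y Hy. eexists. apply HF, Hy.
  - apply filter_prod_at_point_ge. intros y Hy.
    apply (continuous_ext_loc _ (fun t => t ^ k * PSeries w (exp (- t)))).
    + apply (filter_imp (fun t => 0 < t)); [| apply open_gt; lra].
      intros t Ht. symmetry. apply is_derive_unique, is_derive_neg_antideriv_sum, Ht.
    + apply (@ex_derive_continuous R_AbsRing R_NormedModule). eexists.
      apply (is_derive_mult (fun t => t ^ k)).
      * apply (is_derive_pow (fun t => t)), is_derive_id.
      * apply is_derive_PSeries_exp_neg; [exact Hw | lra].
      * apply Rmult_comm.
  - intros P HP. apply locally_singleton in HP. exact HP.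
  - change (is_lim F p_infty 0).
    replace (Finite 0) with (Rbar_opp 0) by (simpl; f_equal; ring).
    apply (is_lim_opp (antideriv_sum k k)), is_lim_antideriv_sum. lia.
Qed.

End Antiderivative.

Lemma PSeries_delta (q : nat) (c z : R) :
  PSeries (fun m => if Nat.eqb m q then c else 0) z = c * z ^ q.
Proof.
  apply is_pseries_unique. unfold is_pseries, is_series.
  apply (filterlim_ext_loc (fun _ => c * z ^ q)); [| apply filterlim_const].
  exists q. intros N HN.
  rewrite (sum_n_ext _ (fun m => if Nat.eqb m q then c * z ^ m else 0)).
  - rewrite sum_n_Reals, (sum_f_R0_delta (fun m => c * z ^ m)) by exact HN. reflexivity.
  - intros m. change (scal ?u ?v) with (u * v). rewrite pow_n_pow.
    destruct (Nat.eqb m q); [apply Rmult_comm | apply Rmult_0_r].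
Qed.

Lemma exp_neg_pow (y : R) (m : nat) : exp (- y) ^ m = exp (- INR m * y).
Proof.
  induction m as [|m IH].
  - rewrite pow_O. replace (- INR 0 * y) with 0 by (simpl; ring). rewrite exp_0. reflexivity.
  - rewrite <- tech_pow_Rmult, IH, S_INR, <- exp_plus. f_equal. ring.
Qed.

Lemma RInt_gen_exp_mul_pow (q k : nat) (eps : R) : (1 <= q)%nat -> 0 < eps ->
  RInt_gen (fun y => exp (- INR q * y) * y ^ k) (at_point eps) (Rbar_locally p_infty) =
  sum_f_R0 (fun i => fact_ratio k i * eps ^ i * (exp (- eps) ^ q / INR q ^ (k + 1 - i))) k.
Proof.
  intros Hq Heps. apply is_RInt_gen_unique. set (w := fun m => if Nat.eqb m q then 1 else 0).
  assert (Hw : radius_ge1 w).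
  { apply radius_ge1_le with (fun _ => 1); [|apply radius_ge1_const].
    intros m. unfold w. destruct (Nat.eqb m q); rewrite ?Rabs_R1, ?Rabs_R0; lra. }
  assert (Hw0 : w 0%nat = 0) by (unfold w; destruct q; [lia | reflexivity]).
  replace (sum_f_R0 _ k) with (antideriv_sum w k k eps).
  2:{ apply sum_eq. intros i _. f_equal. unfold polylog_exp.
      rewrite (PSeries_ext _ (fun m => if Nat.eqb m q then / INR q ^ (k + 1 - i) else 0)),
        PSeries_delta by (intros m; unfold w_div_pow, w; destruct (Nat.eqb_spec m q) as [->|];
                          unfold Rdiv; ring).
      unfold Rdiv. ring. }
  apply (is_RInt_gen_ext (fun y => y ^ k * PSeries w (exp (- y)))).
  - apply filter_prod_at_point_gt. intros y _.
    unfold w. rewrite PSeries_delta, exp_neg_pow. rewrite Rmult_1_l. apply Rmult_comm.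
  - apply is_RInt_gen_pow_mul_PSeries_exp_neg; assumption.
Qed.

Lemma is_series_pseries_tail (a : nat -> R) (z l : R) :
  a 0%nat = 0 -> is_pseries a z l -> is_series (fun n => a (S n) * z ^ S n) l.
Proof.
  intros Ha0 Hl. apply (is_series_incr_1 (fun n => a n * z ^ n)).
  rewrite Ha0, Rmult_0_l. change (plus l 0) with (l + 0). rewrite Rplus_0_r.
  apply (is_series_ext (fun n => scal (pow_n z n) (a n))); [|exact Hl].
  intros n. change (scal ?u ?v) with (u * v). rewrite pow_n_pow. apply Rmult_comm.
Qed.

Lemma is_series_sum_f_R0 (f : nat -> nat -> R) (l : nat -> R) (N : nat) :
  (forall i, (i <= N)%nat -> is_series (f i) (l i)) ->
  is_series (fun n => sum_f_R0 (fun i => f i n) N) (sum_f_R0 l N).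
Proof.
  intros Hf. induction N as [|N IH]; simpl; [apply Hf; lia|].
  apply (is_series_plus (fun n => sum_f_R0 (fun i => f i n) N) (f (S N))).
  - apply IH. intros i Hi. apply Hf. lia.
  - apply Hf. lia.
Qed.

Lemma is_RInt_gen_sum_f_R0 (g : nat -> R -> R) (l : nat -> R) (N : nat)
  (Fa Fb : (R -> Prop) -> Prop) {FFa : Filter Fa} {FFb : Filter Fb} :
  (forall j, (j <= N)%nat -> is_RInt_gen (g j) Fa Fb (l j)) ->
  is_RInt_gen (fun x => sum_f_R0 (fun j => g j x) N) Fa Fb (sum_f_R0 l N).
Proof.
  intros Hg. induction N as [|N IH]; simpl; [apply Hg; lia|].
  apply (is_RInt_gen_plus (V := R_NormedModule) (fun x => sum_f_R0 (fun j => g j x) N) (g (S N))).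
  - apply IH. intros j Hj. apply Hg. lia.
  - apply Hg. lia.
Qed.

Lemma Zeps_antideriv_sum (eps : R) (k j : nat) : 0 < eps -> (1 <= j)%nat ->
  Zeps eps k j = antideriv_sum (npow j) k k eps.
Proof.
  intros Heps Hj. pose proof (exp_neg_bounds eps Heps) as Hz.
  unfold Zeps. apply is_series_unique.
  apply (is_series_ext (fun n => sum_f_R0 (fun i => fact_ratio k i * eps ^ i *
    (w_div_pow (npow j) (k + 1 - i) (S n) * exp (- eps) ^ S n)) k)).
  { intros n. rewrite RInt_gen_exp_mul_pow, scal_sum by (lia || lra). apply sum_eq. intros i _. unfold w_div_pow, npow, Rdiv. ring. }
  apply is_series_sum_f_R0. intros i _.
  apply (is_series_scal_l (V := R_NormedModule) (fact_ratio k i * eps ^ i)).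
  apply is_series_pseries_tail.
  - unfold w_div_pow, npow. destruct j as [|j]; [lia|]. simpl. unfold Rdiv. ring.
  - apply PSeries_correct, CV_radius_inside, radius_ge1_lt; [|lra].
    apply radius_ge1_w_div_pow, radius_ge1_npow.
Qed.

Theorem mainTheorem18 (k : nat) (eps : R) :
  (1 <= k)%nat -> 0 < eps ->
  is_RInt_gen (fun x => x ^ k * Derive_n hfun k x / (exp x - 1))
    (at_point eps) (Rbar_locally p_infty)
    (sum_n_m (fun j => (-1) ^ (j + 1) * Kcoef (k + 1) j * Zeps eps k j) 1 (k + 1)).
Proof.
  intros Hk Heps.
  replace (sum_n_m _ 1 (k + 1)) with
    (sum_f_R0 (fun j => Kcoef_signed k (S j) * antideriv_sum (npow (S j)) k k eps) k).
  2:{ rewrite Nat.add_1_r, <- sum_n_m_S, <- sum_n_Reals.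
      apply sum_n_ext. intros j. unfold Kcoef_signed.
      rewrite Zeps_antideriv_sum, !Nat.add_1_r by (lia || lra). reflexivity. }
  apply (is_RInt_gen_ext (fun x => sum_f_R0 (fun j =>
    Kcoef_signed k (S j) * (x ^ k * PSeries (npow (S j)) (exp (- x)))) k)).
  - apply filter_prod_at_point_gt. intros x Hx.
    unfold Rdiv. rewrite Rmult_assoc. fold (Derive_n hfun k x / (exp x - 1)).
    rewrite Derive_n_hfun_div, scal_sum by (lia || lra). apply sum_eq. intros j _. ring.
  - apply is_RInt_gen_sum_f_R0; [typeclasses eauto.. |]. intros j _.
    apply (is_RInt_gen_scal (V := R_NormedModule)), is_RInt_gen_pow_mul_PSeries_exp_neg.
    + apply radius_ge1_npow.
    + unfold npow. simpl. ring.
    + exact Heps.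
Qed.
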